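(* For all $n\in\mathbb{N}$ and $a,b,c\in\mathbb{C}$ with $b\notin\mathbb{Z}^-$: \begin{align*} \sum_{j=0}^{n}\sum_{i=0}^{j}\frac{\binom{2n+a+2}{i}}{\binom{2n+1}{j}}&=\sum_{k=0}^{n}\frac{n+1}{2k+1}\,\frac{\binom{2k+a}{k}}{\binom{2k}{k}},\\ \sum_{j=0}^{n}\sum_{i=0}^{j}\frac{\binom{2n+3}{i}}{\binom{2n+b+1}{j}}&=\sum_{k=0}^{n}\frac{2n+b+2}{k+b+1}\,\frac{\binom{2k+1}{k}+\frac{4^k b}{k+1}}{\binom{2k+b+2}{k+1}},\\ \sum_{j=0}^{n}\sum_{i=0}^{j}\frac{\binom{n+1}{i}}{\binom{n+b}{j}}\,c^{j-i}&=\sum_{k=0}^{n}\frac{n+b+1}{b+1}\,\frac{(c+1)^k}{\binom{k+b+1}{k}},\\ \sum_{j=0}^{n}\sum_{i=0}^{j}\frac{\binom{n+2}{i}}{\binom{n}{j}}\,c^{j-i+1}&=\sum_{k=0}^{n}\frac{n+1}{k+1}\left((c+1)^{k+1}-1\right). \end{align*}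
   Context: For $x\in\mathbb{C}$, $i\in\mathbb{N}$: $\binom{x}{i}=x(x-1)\cdots(x-i+1)/i!$. $\mathbb{Z}^-=\{-1,-2,\dots\}$. Here $c^0=1$ for every $c$. *)

From HB Require Import structures.
From mathcomp Require Import all_boot all_order all_algebra.
Set Implicit Arguments. Unset Strict Implicit. Unset Printing Implicit Defensive.
Import Order.TTheory GRing.Theory Num.Theory.
Local Open Scope ring_scope.

Definition binomC (R : fieldType) (x : R) (i : nat) : R :=
  (\prod_(k < i) (x - (k : nat)%:R)) / (i`!)%:R.

From HB Require Import structures.
From mathcomp Require Import all_boot all_order all_algebra ring zify.
Import Order.TTheory GRing.Theory Num.Theory.

(* Pascal's rule for psum in x, together
   with the inverse Pascal rule
     1/binom(y+1, j) + 1/binom(y+1, j+1) = (y+2) / ((y+1) binom(y, j)),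
   relates dsum at (x+1, y+1, N+1) to dsum at (x, y, N) (dsum_step). Each identity is then
   an induction on n, shifting x and y by one step (third and fourth identities) or two
   steps (first and second); the boundary terms are evaluated with psum m c m = (c+1)^m
   and, for the second identity, sum_(i <= n+1) C(2n+3, i) = 4^(n+1). *)

Set Implicit Arguments.
Unset Strict Implicit.
Unset Printing Implicit Defensive.

Lemma sum_bin_half n : \sum_(0 <= i < n.+2) 'C(2 * n + 3, i) = 4 ^ n.+1.
Proof.
have sum_all : \sum_(0 <= i < (2 * n + 3).+1) 'C(2 * n + 3, i) = 2 ^ (2 * n + 3).
  rewrite big_mkord (Pascal 1 1).
  by apply: eq_bigr => i _; rewrite !exp1n !muln1.
have halves : \sum_(0 <= i < n.+2) 'C(2 * n + 3, i)
              = \sum_(n.+2 <= i < (2 * n + 3).+1) 'C(2 * n + 3, i).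
  rewrite -{2}[n.+2]add0n big_addn big_nat_rev (_ : (2 * n + 3).+1 - n.+2 = n.+2) //; last by lia.
  by apply: eq_big_nat => i /andP[_ lt_in]; rewrite -bin_sub; [congr 'C(_, _); lia | lia].
rewrite (big_cat_nat _ (n := n.+2)) /= in sum_all; [|lia|lia].
rewrite -halves in sum_all.
have : 2 ^ (2 * n + 3) = 2 * 4 ^ n.+1 by rewrite -[4]/(2 ^ 2) -expnM -expnS; congr (2 ^ _); lia.
by lia.
Qed.

Local Open Scope ring_scope.

Section GeneralizedBinomial.

Variable R : numFieldType.
Implicit Types x y c : R.

Lemma binomC0 x : binomC x 0 = 1.
Proof. by rewrite /binomC big_ord0 fact0 divr1. Qed.

Lemma binomC1 x : binomC x 1 = x.
Proof. by rewrite /binomC big_ord1 subr0 divr1. Qed.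

Lemma mul_binomC_left x j :
  (j.+1)%:R * binomC x j.+1 = (x - j%:R) * binomC x j.
Proof.
rewrite /binomC big_ord_recr factS natrM /=.
by field; rewrite nat1r !pnatr_eq0 -lt0n fact_gt0.
Qed.

Lemma mul_binomC_diag x j :
  (x + 1) * binomC x j = (j.+1)%:R * binomC (x + 1) j.+1.
Proof.
rewrite /binomC big_ord_recl subr0 factS natrM.
under [in RHS]eq_bigr => k _ do rewrite /bump /= -natr1 opprD addrACA subrr addr0.
by field; rewrite nat1r !pnatr_eq0 -lt0n fact_gt0.
Qed.

Lemma mul_binomC_down x j :
  (x + 1) * binomC x j = (x + 1 - j%:R) * binomC (x + 1) j.
Proof. by rewrite mul_binomC_diag mul_binomC_left. Qed.

Lemma binomCS x j : binomC (x + 1) j.+1 = binomC x j.+1 + binomC x j.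
Proof.
apply: (mulfI (_ : (j.+1)%:R != 0)); first by rewrite pnatr_eq0.
by rewrite -mul_binomC_diag mulrDr mul_binomC_left -natr1; ring.
Qed.

Lemma binomC_nat m i : binomC (m%:R : R) i = 'C(m, i)%:R.
Proof.
elim: m i => [|m IH] [|i]; rewrite ?binomC0 ?bin0 //.
  by rewrite /binomC big_ord_recl subrr !mul0r.
by rewrite -natr1 binomCS !IH binS natrD.
Qed.

Lemma binomC_neq0 y j : (forall k, (k < j)%N -> y != k%:R) -> binomC y j != 0.
Proof.
move=> yP; rewrite mulf_neq0 ?invr_eq0 ?pnatr_eq0 -?lt0n ?fact_gt0 //.
by apply/prodf_neq0 => k _; rewrite subr_eq0 yP.
Qed.

Lemma binomCV_pascal y j : y + 1 != 0 -> binomC y j != 0 ->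
  (binomC (y + 1) j)^-1 + (binomC (y + 1) j.+1)^-1 = (y + 2) / (y + 1) / binomC y j.
Proof.
move=> y1_neq0 bin_neq0.
have ybin_neq0 : (y + 1) * binomC y j != 0 by rewrite mulf_neq0.
have yj_neq0 : y + 1 - j%:R != 0.
  by apply: contraNneq ybin_neq0 => yj0; rewrite mul_binomC_down yj0 mul0r.
have j1_neq0 : (j.+1)%:R != 0 :> R by rewrite pnatr_eq0.
have -> : binomC (y + 1) j = (y + 1) * binomC y j / (y + 1 - j%:R).
  by rewrite mul_binomC_down mulrAC divff ?mul1r.
have -> : binomC (y + 1) j.+1 = (y + 1) * binomC y j / (j.+1)%:R.
  by rewrite mul_binomC_diag mulrAC divff ?mul1r.
by field; rewrite yj_neq0 y1_neq0 bin_neq0 nat1r pnatr_eq0.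
Qed.

End GeneralizedBinomial.

Section DoubleSum.

Variable R : numFieldType.
Implicit Types x y c : R.

Definition psum x c j := \sum_(0 <= i < j.+1) binomC x i * c ^+ (j - i).

Definition dsum x y c N :=
  \sum_(0 <= j < N) \sum_(0 <= i < j.+1) binomC x i / binomC y j * c ^+ (j - i).

Lemma dsumE x y c N : dsum x y c N = \sum_(0 <= j < N) psum x c j / binomC y j.
Proof.
apply: eq_bigr => j _; rewrite /psum big_distrl; apply: eq_bigr => i _.
by rewrite mulrAC.
Qed.

Lemma dsumSr x y c N : dsum x y c N.+1 = dsum x y c N + psum x c N / binomC y N.
Proof. by rewrite !dsumE big_nat_recr. Qed.

Lemma psum0 x c : psum x c 0 = 1.
Proof. by rewrite /psum big_nat1 binomC0 mulr1. Qed.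

Lemma psumS x c j : psum x c j.+1 = c * psum x c j + binomC x j.+1.
Proof.
rewrite /psum big_nat_recr //= subnn mulr1 big_distrr; congr (_ + _).
by apply: eq_big_nat => i /andP[_ lt_ij]; rewrite subSn // exprS mulrCA.
Qed.

Lemma psum_pascal x c j : psum (x + 1) c j.+1 = psum x c j.+1 + psum x c j.
Proof.
rewrite /psum big_nat_recl // binomC0 [X in _ = X + _]big_nat_recl // binomC0.
rewrite -addrA -big_split; congr (_ + _); apply: eq_bigr => i _.
by rewrite binomCS subSS mulrDl.
Qed.

Lemma psum_nat m c : psum m%:R c m = (c + 1) ^+ m.
Proof.
rewrite /psum exprDn big_mkord; apply: eq_bigr => i _.
by rewrite binomC_nat expr1n mulr1 mulr_natl.
Qed.

Lemma dsum_step x y c N : (forall k, (k < N)%N -> y + 1 != k%:R) ->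
  dsum (x + 1) (y + 1) c N.+1
  = (y + 2) / (y + 1) * dsum x y c N + psum x c N / binomC (y + 1) N.
Proof.
move=> yP; rewrite !dsumE big_nat_recl //.
have -> : psum (x + 1) c 0 = psum x c 0 by rewrite !psum0.
under eq_big_nat => j _ do rewrite psum_pascal mulrDl.
rewrite big_split addrA -(big_nat_recl _ _ (fun j => psum x c j / binomC (y + 1) j)) //.
rewrite big_nat_recr //= addrAC.
congr (_ + _); rewrite big_distrr -big_split; apply: eq_big_nat => j /andP[_ lt_jN].
have y1_neq0 : y + 1 != 0 by apply: yP 0%N _; lia.
have bin_neq0 : binomC y j != 0.
  apply: binomC_neq0 => k lt_kj; apply: contra_neq (yP k.+1 _) => [->|]; [exact: natr1 | lia].
by rewrite /= -mulrDr binomCV_pascal // mulrCA.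
Qed.

Lemma dsum_step2 x y c N : (forall k, (k <= N.+1)%N -> y + 2 != k%:R) ->
  dsum (x + 2) (y + 2) c N.+2
  = (y + 3) / (y + 1) * dsum x y c N.+1
    + psum x c N.+1 / binomC (y + 2) N.+1 - psum x c N / binomC (y + 2) N.+2.
Proof.
move=> yP; have yE : y + 2 = y + 1 + 1 by ring.
have avoid k : (k <= N.+1)%N -> y + 1 + 1 != k%:R by rewrite -yE; apply: yP.
have y1_neq0 : y + 1 != 0.
  by apply: contra_neq (avoid 1%N _) => [->|//]; rewrite add0r.
have y2_neq0 : y + 2 != 0 by rewrite yE; exact: avoid 0%N isT.
have binN_neq0 : binomC y N != 0.
  apply: binomC_neq0 => k lt_kN; apply: contra_neq (avoid k.+2 _) => [->|]; last by lia.
  by rewrite -!natr1.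
have binSN_neq0 : binomC (y + 1) N.+1 != 0.
  apply: binomC_neq0 => k lt_kN; apply: contra_neq (avoid k.+1 _) => [->|]; last by lia.
  by rewrite natr1.
have -> : x + 2 = x + 1 + 1 by ring.
rewrite yE dsum_step; last by move=> k lt_kN; apply: avoid; lia.
rewrite dsum_step; last first.
  by move=> k lt_kN; apply: contra_neq (avoid k.+1 _) => [->|]; [rewrite natr1 | lia].
rewrite dsumSr psum_pascal -yE.
have pascal_y := binomCV_pascal y1_neq0 binN_neq0.
have pascal_y1 := binomCV_pascal (avoid 0%N isT) binSN_neq0.
rewrite -yE (_ : y + 1 + 2 = y + 3) in pascal_y1; last by ring.
rewrite (canRL (addKr _) pascal_y1).
have -> : (binomC y N)^-1
    = (y + 1) / (y + 2) * ((binomC (y + 1) N)^-1 + (binomC (y + 1) N.+1)^-1).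
  by rewrite pascal_y; field; rewrite y1_neq0 y2_neq0 binN_neq0.
set iB1 := (binomC (y + 1) N)^-1; set iB2 := (binomC (y + 1) N.+1)^-1.
set iB3 := (binomC (y + 2) N.+1)^-1.
by field; rewrite y1_neq0 y2_neq0.
Qed.

End DoubleSum.

Lemma big_rescale_recr (R : fieldType) (s t : R) (u F : nat -> R) N : s != 0 ->
  \sum_(0 <= k < N.+1) t * u k * F k
  = t / s * \sum_(0 <= k < N) s * u k * F k + t * u N * F N.
Proof.
move=> s_neq0; rewrite big_nat_recr //= mulr_sumr; congr (_ + _).
by apply: eq_bigr => k _; rewrite !mulrA divfK.
Qed.

Section Identities.

Variable R : numFieldType.
Implicit Types c : R.

Lemma mul_psum_nat m c : c * psum (m.+1)%:R c m = (c + 1) ^+ m.+1 - 1.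
Proof. by rewrite -psum_nat psumS binomC_nat binn addrK. Qed.

Lemma mul_dsum_nat c n :
  c * dsum (n.+2)%:R n%:R c n.+1
  = \sum_(0 <= k < n.+1) (n.+1)%:R / (k.+1)%:R * ((c + 1) ^+ k.+1 - 1).
Proof.
elim: n => [|n IH].
  by rewrite dsumSr /dsum big_nil add0r psum0 binomC0 big_nat1 expr1 addrK !divr1 mulr1 mul1r.
rewrite (big_rescale_recr (s := (n.+1)%:R)) ?pnatr_eq0 // -IH.
rewrite -[(n.+3)%:R]natr1 -[(n.+1)%:R]natr1 dsum_step; last first.
  by move=> k lt_kn; rewrite natr1 eqr_nat; lia.
rewrite natr1 binomC_nat binn divr1 -mul_psum_nat.
by rewrite -natrD addn2 divff ?pnatr_eq0 // mul1r mulrDr mulrCA.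
Qed.

Lemma dsum_den_odd (a : R) n :
  dsum ((2 * n)%:R + a + 2) (2 * n + 1)%:R 1 n.+1
  = \sum_(0 <= k < n.+1)
      (n.+1)%:R / (2 * k + 1)%:R * (binomC ((2 * k)%:R + a) k / binomC (2 * k)%:R k).
Proof.
elim: n => [|n IH].
  by rewrite dsumSr /dsum big_nil add0r psum0 big_nat1 !binomC0 !divr1 mul1r.
rewrite (big_rescale_recr (s := (n.+1)%:R)) ?pnatr_eq0 // -IH.
set x := (2 * n)%:R + a + 2; set y : R := (2 * n + 1)%:R.
rewrite (_ : _ + a + 2 = x + 2); last by rewrite /x; ring.
rewrite (_ : (2 * n.+1 + 1)%:R = y + 2); last by rewrite /y; ring.
rewrite dsum_step2 => [|k le_kn]; last by rewrite /y -natrD eqr_nat; lia.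
have yE : y + 2 = (2 * n + 3)%:R by rewrite /y; ring.
have binSE : binomC (y + 2) n.+2 = binomC (y + 2) n.+1.
  by rewrite yE !binomC_nat -bin_sub; [congr 'C(_, _)%:R; lia | lia].
have := mul_binomC_down (y + 1) n.+1.
rewrite (_ : y + 1 + 1 = y + 2); last by ring.
rewrite (_ : (2 * n.+1)%:R = y + 1); last by rewrite /y; ring.
rewrite (_ : y + 1 + a = x); last by rewrite /x /y; ring.
rewrite binSE psumS mul1r.
rewrite (_ : y + 2 - (n.+1)%:R = (n.+2)%:R); last by rewrite /y; ring.
have n2_neq0 : (n.+2)%:R != 0 :> R by rewrite pnatr_eq0.
move/(canLR (mulKf n2_neq0)) <-.
have bin_neq0 : binomC (y + 1) n.+1 != 0.
  by rewrite (_ : y + 1 = (2 * n + 2)%:R) ?binomC_nat ?pnatr_eq0 -?lt0n ?bin_gt0 /y; [lia | ring].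
rewrite /y; field.
by rewrite bin_neq0 -!natrM !natr1 !nat1r -!natrD !pnatr_eq0.
Qed.

Section AwayFromNegativeIntegers.

Variable b : R.
Hypothesis hb : forall m : nat, b != - (m.+1)%:R.

Lemma shift_neq_nat d k : (k <= d)%N -> d%:R + b + 1 != k%:R.
Proof.
move=> le_kd; apply: contra_neq (hb (d - k)) => shiftE.
have -> : b = (d%:R + b + 1) - d%:R - 1 by ring.
by rewrite shiftE -natr1 natrB //; ring.
Qed.

Lemma shift_neq0 d : d%:R + b + 1 != 0.
Proof. exact: shift_neq_nat (leq0n d). Qed.

Lemma dsum_den_shift c n :
  dsum (n.+1)%:R (n%:R + b) c n.+1
  = \sum_(0 <= k < n.+1) (n%:R + b + 1) / (b + 1) * ((c + 1) ^+ k / binomC (k%:R + b + 1) k).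
Proof.
have b1_neq0 : b + 1 != 0 by have := shift_neq0 0; rewrite add0r.
elim: n => [|n IH].
  rewrite dsumSr /dsum big_nil add0r psum0 binomC0 big_nat1 !add0r binomC0.
  by rewrite expr0 !divr1 divff ?mulr1.
rewrite (big_rescale_recr (s := n%:R + b + 1)) ?shift_neq0 // -IH.
rewrite -[(n.+2)%:R]natr1 (_ : (n.+1)%:R + b = n%:R + b + 1); last by rewrite -natr1; ring.
rewrite dsum_step => [|k lt_kn]; last by apply: shift_neq_nat; lia.
rewrite psum_nat; congr (_ + _); first by rewrite (_ : n%:R + b + 1 + 1 = n%:R + b + 2) //; ring.
have bin_neq0 : binomC (n%:R + b + 1) n.+1 != 0.
  by apply: binomC_neq0 => k lt_kn; apply: shift_neq_nat; lia.
have := mul_binomC_down (n%:R + b + 1) n.+1.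
rewrite -natr1 (_ : n%:R + b + 1 + 1 - (n%:R + 1) = b + 1); last by ring.
move/(canLR (mulKf b1_neq0)) <-.
have nb2_neq0 : n%:R + b + 1 + 1 != 0.
  by rewrite (_ : _ + 1 + 1 = (n.+1)%:R + b + 1) ?shift_neq0 // -natr1; ring.
by field; rewrite b1_neq0 bin_neq0 nb2_neq0.
Qed.

Lemma psum_half n : psum (2 * n + 3)%:R 1 n.+1 = 4%:R ^+ n.+1 :> R.
Proof.
rewrite /psum -natrX -sum_bin_half natr_sum; apply: eq_bigr => i _.
by rewrite expr1n mulr1 binomC_nat.
Qed.

Lemma dsum_num_odd n :
  dsum (2 * n + 3)%:R ((2 * n)%:R + b + 1) 1 n.+1
  = \sum_(0 <= k < n.+1)
      ((2 * n)%:R + b + 2) / (k%:R + b + 1)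
      * ((binomC (2 * k + 1)%:R k + 4%:R ^+ k * b / (k.+1)%:R)
         / binomC ((2 * k)%:R + b + 2) k.+1).
Proof.
have b1_neq0 : b + 1 != 0 by have := shift_neq0 0; rewrite add0r.
have b2_neq0 : b + 2 != 0.
  by have := shift_neq0 1; rewrite (_ : 1%:R + b + 1 = b + 2) //; ring.
elim: n => [|n IH].
  rewrite dsumSr /dsum big_nil add0r psum0 big_nat1 !binomC0 binomC1 expr0 !add0r.
  by field; rewrite b1_neq0 b2_neq0.
set x : R := (2 * n + 3)%:R; set y := (2 * n)%:R + b + 1.
have yE : (2 * n.+1)%:R + b + 1 = y + 2 by rewrite /y; ring.
have y1_neq0 : y + 1 != 0.
  by rewrite (_ : y + 1 = (2 * n + 1)%:R + b + 1) ?shift_neq0 // /y; ring.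
have y3_neq0 : y + 3 != 0.
  by rewrite (_ : y + 3 = (2 * n + 3)%:R + b + 1) ?shift_neq0 // /y; ring.
rewrite (big_rescale_recr (s := y + 1)) // (_ : y + 1 = (2 * n)%:R + b + 2) -?IH; last first.
  by rewrite /y; ring.
rewrite yE (_ : (2 * n.+1 + 3)%:R = x + 2); last by rewrite /x; ring.
rewrite dsum_step2 => [|k le_kn]; last first.
  by rewrite (_ : y + 2 = (2 * n + 2)%:R + b + 1) ?shift_neq_nat /y //; [lia | ring].
rewrite (_ : (2 * n.+1 + 1)%:R = x); last by rewrite /x; ring.
rewrite (_ : (2 * n.+1)%:R + b + 2 = y + 3); last by rewrite /y; ring.
rewrite (_ : (2 * n)%:R + b + 2 = y + 1) -/y -/x; last by rewrite /y; ring.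
have := psumS x 1 n; rewrite psum_half mul1r => /(canLR (addrK _)) <-.
have := mul_binomC_left (y + 2) n.+1.
rewrite (_ : y + 2 - (n.+1)%:R = (n.+1)%:R + b + 1); last by rewrite /y; ring.
have n2_neq0 : (n.+2)%:R != 0 :> R by rewrite pnatr_eq0.
move/(canRL (mulKf n2_neq0)) ->.
have := mul_binomC_diag (y + 2) n.+1.
rewrite (_ : y + 2 + 1 = y + 3); last by ring.
move/(canLR (mulKf n2_neq0)) <-.
have bin_neq0 : binomC (y + 2) n.+1 != 0.
  apply: binomC_neq0 => k lt_kn.
  by rewrite (_ : y + 2 = (2 * n + 2)%:R + b + 1) ?shift_neq_nat /y //; [lia | ring].
by field; rewrite -natrD pnatr_eq0 bin_neq0 y3_neq0 nat1r shift_neq0 y1_neq0.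
Qed.

End AwayFromNegativeIntegers.

End Identities.

Theorem corollary1 (C : numClosedFieldType) (n : nat) (a b c : C)
  (hb : forall m : nat, b != - (m.+1)%:R) :
  [/\ \sum_(0 <= j < n.+1) \sum_(0 <= i < j.+1)
         binomC ((2 * n)%:R + a + 2) i / binomC (2 * n + 1)%:R j
      = \sum_(0 <= k < n.+1)
         (n.+1)%:R / (2 * k + 1)%:R * (binomC ((2 * k)%:R + a) k / binomC (2 * k)%:R k),
      \sum_(0 <= j < n.+1) \sum_(0 <= i < j.+1)
         binomC (2 * n + 3)%:R i / binomC ((2 * n)%:R + b + 1) j
      = \sum_(0 <= k < n.+1)
         ((2 * n)%:R + b + 2) / (k%:R + b + 1)
         * ((binomC (2 * k + 1)%:R k + 4%:R ^+ k * b / (k.+1)%:R)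
            / binomC ((2 * k)%:R + b + 2) k.+1),
      \sum_(0 <= j < n.+1) \sum_(0 <= i < j.+1)
         binomC (n.+1)%:R i / binomC (n%:R + b) j * c ^+ (j - i)
      = \sum_(0 <= k < n.+1)
         (n%:R + b + 1) / (b + 1) * ((c + 1) ^+ k / binomC (k%:R + b + 1) k)
    & \sum_(0 <= j < n.+1) \sum_(0 <= i < j.+1)
         binomC (n.+2)%:R i / binomC n%:R j * c ^+ (j - i + 1)
      = \sum_(0 <= k < n.+1)
         (n.+1)%:R / (k.+1)%:R * ((c + 1) ^+ k.+1 - 1)].
Proof.
split.
- rewrite -dsum_den_odd; apply: eq_bigr => j _; apply: eq_bigr => i _.
  by rewrite expr1n mulr1.
- rewrite -(dsum_num_odd hb); apply: eq_bigr => j _; apply: eq_bigr => i _.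
  by rewrite expr1n mulr1.
- exact: dsum_den_shift.
- rewrite -mul_dsum_nat mulr_sumr; apply: eq_bigr => j _.
  rewrite mulr_sumr; apply: eq_bigr => i _.
  by rewrite addn1 exprSr mulrA [RHS]mulrC.
Qed.
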